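(* Let $M_s=\mathbf{Sp}(2,\mathbb{R})/\mathbf{SL}(2,\mathbb{R})_s$ with the $\mathbf{Sp}(2,\mathbb{R})$-invariant metric $g_K=2(f^4)^2-2f^3\odot f^5+f^2\odot f^6-4f^1\odot f^7$ (notation as in the context). The most general $\mathbf{Sp}(2,\mathbb{R})$-invariant 3-form $\phi$ on $M_s$ (i.e. of the form $\tfrac16\phi_{\mu\nu\rho}f^\mu\wedge f^\nu\wedge f^\rho$ with constant coefficients, $\mu,\nu,\rho\in\{1,\dots,7\}$, satisfying $\mathcal{L}_X\phi=0$ for all $X$ in $D_s$) such that $(g_K,\phi)$ is compatible is the 1-parameter family $$\phi=2f^{147}+\tfrac12f^{246}+f^{345}+qf^{136}+\frac{1}{q}f^{257},\qquad q\neq0.$$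
   Context: Realize $\mathfrak{sp}(2,\mathbb{R})$ as the real $4\times 4$ matrices $$E=\begin{pmatrix} a_5&a_7&a_9&2a_{10}\\ -a_4&a_6&a_8&a_9\\ a_2&a_3&-a_6&-a_7\\ -2a_1&a_2&a_4&-a_5\end{pmatrix}$$ with basis $E_I=\partial E/\partial a_I$. Put $f_1=E_1,\ f_2=E_3,\ f_3=E_4,\ f_4=E_6-E_5,\ f_5=E_7,\ f_6=E_8,\ f_7=E_{10},\ f_8=E_2,\ f_9=E_5+E_6,\ f_{10}=E_9$, regarded as left-invariant vector fields on $\mathbf{Sp}(2,\mathbb{R})$, with dual left-invariant 1-forms $(f^I)$. $\mathbf{SL}(2,\mathbb{R})_s$ is the subgroup with Lie algebra $\mathrm{Span}(E_2,E_5+E_6,E_9)=\mathrm{Span}(f_8,f_9,f_{10})$; $D_s$ is the distribution spanned by $f_8,f_9,f_{10}$, with leaf space $M_s$; forms in $f^1,\dots,f^7$ with constant coefficients annihilated by $\mathcal{L}_X$, $X\in D_s$, descend to $M_s$. A pair $(g,\phi)$ is compatible if $(f_\mu\lrcorner\phi)\wedge(f_\nu\lrcorner\phi)\wedge\phi=3g(f_\mu,f_\nu)\,f^1\wedge\cdots\wedge f^7$ for all $\mu,\nu=1,\dots,7$. Notation: $f^I\odot f^J=\tfrac12(f^I\otimes f^J+f^J\otimes f^I)$, $(f^I)^2=f^I\odot f^I$, $f^{\mu\nu\rho}=f^\mu\wedge f^\nu\wedge f^\rho$. *)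

From mathcomp Require Import all_boot all_order all_algebra all_fingroup.
From mathcomp Require Import reals.
Set Implicit Arguments. Unset Strict Implicit. Unset Printing Implicit Defensive.
Import Order.TTheory GRing.Theory Num.Theory.
Local Open Scope ring_scope.

Section Sp2.
Variable R : realType.

(* Indices: the basis vector f_{k+1} of sp(2,R) is indexed by k : 'I_10,
   so 'I_7 indexes f_1..f_7 and k >= 7 indexes f_8, f_9, f_10. *)

Definition Emat (a : nat -> R) : 'M[R]_4 := \matrix_(i < 4, j < 4)
  match nat_of_ord i, nat_of_ord j with
  | 0, 0 => a 5%N | 0, 1 => a 7%N | 0, 2 => a 9%N | 0, _ => 2 * a 10%N
  | 1, 0 => - a 4%N | 1, 1 => a 6%N | 1, 2 => a 8%N | 1, _ => a 9%N
  | 2, 0 => a 2%N | 2, 1 => a 3%N | 2, 2 => - a 6%N | 2, _ => - a 7%N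
  | _, 0 => - 2 * a 1%N | _, 1 => a 2%N | _, 2 => a 4%N | _, _ => - a 5%N
  end.

(* E_I = dE/da_I  (E is linear in a) *)
Definition EI (I : nat) : 'M[R]_4 := Emat (fun k => (k == I)%:R).

Definition fb (k : 'I_10) : 'M[R]_4 :=
  match nat_of_ord k with
  | 0 => EI 1 | 1 => EI 3 | 2 => EI 4 | 3 => EI 6 - EI 5 | 4 => EI 7
  | 5 => EI 8 | 6 => EI 10 | 7 => EI 2 | 8 => EI 5 + EI 6 | _ => EI 9
  end.

Definition mxe (M : 'M[R]_4) (i j : nat) : R := M (inord i) (inord j).
Definition fdual (k : 'I_10) (M : 'M[R]_4) : R :=
  match nat_of_ord k with
  | 0 => - mxe M 3 0 / 2
  | 1 => mxe M 2 1
  | 2 => - mxe M 1 0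
  | 3 => (mxe M 1 1 - mxe M 0 0) / 2
  | 4 => mxe M 0 1
  | 5 => mxe M 1 2
  | 6 => mxe M 0 3 / 2
  | 7 => mxe M 2 0
  | 8 => (mxe M 0 0 + mxe M 1 1) / 2
  | _ => mxe M 0 2
  end.

(* Lie bracket of sp(2,R) (= bracket of the left-invariant vector fields). *)
Definition lieb (A B : 'M[R]_4) : 'M[R]_4 := A *m B - B *m A.

(* A 3-form sum (1/6) phi_{mu nu rho} f^mu ^ f^nu ^ f^rho (mu,nu,rho in 1..7)
   with constant coefficients is given by its totally antisymmetric
   components phi_{mu nu rho} = phi(f_mu, f_nu, f_rho). *)
Definition form3 := 'I_7 -> 'I_7 -> 'I_7 -> R.
Definition form2 := 'I_7 -> 'I_7 -> R.

Definition antisym3 (phi : form3) : Prop :=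
  forall i j k, phi i j k = - phi j i k /\ phi i j k = - phi i k j.

Definition ext3 (phi : form3) (i j k : 'I_10) : R :=
  if [&& (i < 7)%N, (j < 7)%N & (k < 7)%N]
  then phi (inord i) (inord j) (inord k) else 0.

Definition lie_deriv3 (X : 'M[R]_4) (phi : form3) (i j k : 'I_10) : R :=
  - \sum_(l < 10) (fdual l (lieb X (fb i)) * ext3 phi l j k
                   + fdual l (lieb X (fb j)) * ext3 phi i l k
                   + fdual l (lieb X (fb k)) * ext3 phi i j l).

(* L_X phi = 0 for all X in D_s = span(f_8, f_9, f_10). *)
Definition Ds_invariant (phi : form3) : Prop :=
  forall a : 'I_10, (7 <= a)%N -> forall i j k, lie_deriv3 (fb a) phi i j k = 0.

Definition contr (mu : 'I_7) (phi : form3) : form2 := fun i j => phi mu i j.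

(* The coefficient c of alpha ^ beta ^ gamma = c f^1 ^ ... ^ f^7, for
   2-forms alpha, beta and a 3-form gamma (standard wedge convention:
   (alpha^beta^gamma)(f_1..f_7) = 1/(2!2!3!) sum_s sgn(s) alpha(..)beta(..)gamma(..)). *)
Definition o7 (n : nat) : 'I_7 := inord n.
Definition wedge223_top (al be : form2) (ga : form3) : R :=
  (1 / 24) * \sum_(s : 'S_7) (-1) ^+ s *
     al (s (o7 0)) (s (o7 1)) * be (s (o7 2)) (s (o7 3))
     * ga (s (o7 4)) (s (o7 5)) (s (o7 6)).

Definition compatible (g : form2) (phi : form3) : Prop :=
  forall mu nu : 'I_7,
    wedge223_top (contr mu phi) (contr nu phi) phi = 3 * g mu nu.

(* Symmetric product f^a (.) f^b as a bilinear form (0-based indices). *)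
Definition sprod (a b : nat) : form2 := fun i j =>
  (((i == a :> nat) && (j == b :> nat))%:R + ((i == b :> nat) && (j == a :> nat))%:R) / 2.

Definition gK : form2 := fun i j =>
  2 * sprod 3 3 i j - 2 * sprod 2 4 i j + sprod 1 5 i j - 4 * sprod 0 6 i j.

(* f^{abc} = f^a ^ f^b ^ f^c, as a 3-form (0-based indices):
   f^{abc}(f_i,f_j,f_k) = det [f^x(f_y)]. *)
Definition e3 (a b c : nat) : form3 := fun i j k =>
  \det (\matrix_(r < 3, s < 3)
          ((nth 0%N [:: a; b; c] r == nth 0%N [:: nat_of_ord i; nat_of_ord j; nat_of_ord k] s)%:R : R)).

Definition phi_fam (q : R) : form3 := fun i j k =>
  2 * e3 0 3 6 i j k + (1 / 2) * e3 1 3 5 i j k + e3 2 3 4 i j k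
  + q * e3 0 2 5 i j k + q^-1 * e3 1 4 6 i j k.

End Sp2.

(* A left-invariant 3-form on M_s is a vector of 35 components on f_1, ..., f_7, and
   invariance under D_s = span(f_8, f_9, f_10) = sl(2) is linear in it: f_9 acts
   diagonally on f_1, ..., f_7, which kills every component of nonzero weight, and
   the raising operator f_8 ties the 13 remaining ones together, leaving an explicit
   5-dimensional space with an integral basis.  For phi in that space,
   (f_mu _| phi) ^ (f_nu _| phi) ^ phi is a cubic polynomial in the 5 coordinates;
   four of the 49 compatibility equations already force the coordinates to be
   (q, 0, 0, 1/q, 1/2), and these solve all of them.  All linear algebra in sp(2,R)
   is done on integer data by computation; the sum over S_7 in the wedge product is
   the determinant of a 0/1 matrix, i.e. a Levi-Civita symbol. *)

From mathcomp Require Import all_boot all_order all_algebra all_fingroup.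
From mathcomp Require Import reals ring lra zify.
Import GRing.Theory Num.Theory.
Local Open Scope ring_scope.
Set Implicit Arguments. Unset Strict Implicit. Unset Printing Implicit Defensive.

Ltac vm_eval t := let v := eval vm_compute in t in
  rewrite (_ : t = v); last by vm_compute.

Definition sumz (T : Type) (s : seq T) (F : T -> int) : int :=
  foldr (fun x acc => F x + acc) 0 s.

Lemma sumz_intr (R : pzRingType) (T : Type) (s : seq T) (F : T -> int) :
  (sumz s F)%:~R = \sum_(x <- s) (F x)%:~R :> R.
Proof. by elim: s => [|x s IH]; rewrite ?big_nil ?big_cons //= intrD IH. Qed.

Definition all3 (n : nat) (P : nat -> nat -> nat -> bool) : bool :=
  all (fun i => all (fun j => all (P i j) (iota 0 n)) (iota 0 n)) (iota 0 n).

Lemma all3P (P : nat -> nat -> nat -> bool) n : all3 n P ->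
  forall i j k, (i < n)%N -> (j < n)%N -> (k < n)%N -> P i j k.
Proof.
have iotaP x : (x < n)%N -> x \in iota 0 n by rewrite mem_iota.
move=> /allP H i j k /iotaP hi /iotaP hj /iotaP hk.
by move: (H i hi) => /allP /(_ j hj) /allP /(_ k hk).
Qed.

(** * Levi-Civita symbols and the top-degree wedge product *)

(* Deleting the entry [t0] of a sequence and renumbering the remaining values;
   a second occurrence of [t0] is sent out of range, so repeats give sign 0. *)
Definition delete_renum (t0 n x : nat) : nat :=
  if (x < t0)%N then x else if x == t0 then n else x.-1.

Fixpoint levi_civita (n : nat) (t : seq nat) : int :=
  match n, t with
  | 0, _ => 1
  | n'.+1, t0 :: t' =>
      if (t0 < n)%N then (-1) ^+ t0 * levi_civita n' (map (delete_renum t0 n') t')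
      else 0
  | _, [::] => 0
  end.

Definition unit_rows_mx (R : pzRingType) n (t : seq nat) : 'M[R]_n :=
  \matrix_(i < n, j < n) (j == nth 0%N t i :> nat)%:R.

Lemma bump_delete_renum t0 n (j : nat) x :
  (j < n)%N -> (bump t0 j == x) = (j == delete_renum t0 n x).
Proof.
rewrite /bump /delete_renum => jn.
case: (ltnP x t0) => ?; last case: (x =P t0) => ?.
all: by case: (leqP t0 j) => ?; apply/eqP/eqP; lia.
Qed.

Lemma det_unit_rows_mx (R : comPzRingType) n t :
  size t = n -> \det (unit_rows_mx R n t) = (levi_civita n t)%:~R.
Proof.
elim: n t => [|n IH] [|t0 t] //=; first by rewrite det_mx00.
case=> st; rewrite (expand_det_row _ ord0).
have entry0 (j : 'I_n.+1) : unit_rows_mx R n.+1 (t0 :: t) ord0 j = (j == t0 :> nat)%:R.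
  by rewrite mxE.
case: (ltnP t0 n.+1) => ht0; last first.
  rewrite big1 // => j _; rewrite entry0.
  by case: eqP => [e|]; [move: (ltn_ord j); lia | rewrite mul0r].
rewrite (bigD1 (Ordinal ht0)) //= big1 => [|j /negbTE nj]; last first.
  rewrite entry0; case: eqP => [e|]; last by rewrite mul0r.
  by move: nj; rewrite (_ : j = Ordinal ht0) ?eqxx //; apply: val_inj.
rewrite addr0 entry0 eqxx mul1r /cofactor.
have -> : row' ord0 (col' (Ordinal ht0) (unit_rows_mx R n.+1 (t0 :: t)))
          = unit_rows_mx R n (map (delete_renum t0 n) t).
  apply/matrixP => i j; rewrite !mxE /= (nth_map 0%N) ?st //.
  by rewrite (@bump_delete_renum t0 n j).
by rewrite IH ?size_map // add0n rmorphM rmorphXn rmorphN1.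
Qed.

Notation triple := (nat * nat * nat)%type.

Definition sparse2z (L : seq (int * (nat * nat))) (i j : nat) : int :=
  sumz L (fun e => e.1 * ((i == e.2.1) && (j == e.2.2) : nat)%:Z).
Definition sparse3z (L : seq (int * triple)) (i j k : nat) : int :=
  sumz L (fun e => e.1 * ([&& i == e.2.1.1, j == e.2.1.2 & k == e.2.2] : nat)%:Z).

Definition wedgez (La Lb : seq (int * (nat * nat))) (Lg : seq (int * triple)) : int :=
  sumz La (fun a => sumz Lb (fun b => sumz Lg (fun g => a.1 * b.1 * g.1 *
    levi_civita 7 [:: a.2.1; a.2.2; b.2.1; b.2.2; g.2.1.1; g.2.1.2; g.2.2]))).

Lemma prod_ord7 (R : pzSemiRingType) (F : 'I_7 -> R) : \prod_(i < 7) F i =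
  F (o7 0) * (F (o7 1) * (F (o7 2) * (F (o7 3) * (F (o7 4) * (F (o7 5) * (F (o7 6) * 1)))))).
Proof. by rewrite !big_ord_recl big_ord0 /o7; repeat f_equal; apply/val_inj; rewrite /= inordK. Qed.

Lemma sum_perm_indicators (R : comPzRingType) (t : seq nat) : size t = 7%N ->
  \sum_(s : 'S_7) (-1) ^+ s * \prod_(i < 7) ((s i == nth 0%N t i :> nat)%:R : R)
  = (levi_civita 7 t)%:~R.
Proof.
move=> st; rewrite -det_unit_rows_mx //; apply: eq_bigr => s _.
by congr (_ * _); apply: eq_bigr => i _; rewrite mxE.
Qed.

Lemma mulr_sum3 (R : pzSemiRingType) (I J K : Type) (c : R)
    (A : seq I) (B : seq J) (C : seq K) f g h :
  c * (\sum_(a <- A) f a) * (\sum_(b <- B) g b) * (\sum_(x <- C) h x) =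
  \sum_(a <- A) \sum_(b <- B) \sum_(x <- C) (c * f a * g b * h x).
Proof.
symmetry.
under eq_bigr => a _ do under eq_bigr => b _ do rewrite -big_distrr /=.
under eq_bigr => a _ do rewrite -big_distrl /=.
rewrite -big_distrl /=.
under eq_bigr => a _ do rewrite -big_distrr /=.
by rewrite -big_distrl -big_distrr.
Qed.

Section SparseForms.
Variable R : realType.

Definition sparse2 L : form2 R := fun i j => (sparse2z L i j)%:~R.
Definition sparse3 L : form3 R := fun i j k => (sparse3z L i j k)%:~R.

Lemma wedge223_top_sparse La Lb Lg :
  wedge223_top (sparse2 La) (sparse2 Lb) (sparse3 Lg) = 1 / 24 * (wedgez La Lb Lg)%:~R.
Proof.
rewrite /wedge223_top /sparse2 /sparse3 /sparse2z /sparse3z /wedgez; congr (_ * _).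
under eq_bigr => s _ do rewrite !sumz_intr mulr_sum3.
rewrite exchange_big sumz_intr; apply: eq_bigr => a _.
rewrite exchange_big sumz_intr; apply: eq_bigr => b _.
rewrite exchange_big sumz_intr; apply: eq_bigr => g _.
rewrite intrM -sum_perm_indicators // big_distrr; apply: eq_bigr => s _ /=.
rewrite prod_ord7 /o7 !inordK //=.
move: ((-1) ^+ s) => sg.
move: (s (inord 0) == a.2.1 :> nat) (s (inord 1) == a.2.2 :> nat)
  (s (inord 2) == b.2.1 :> nat) (s (inord 3) == b.2.2 :> nat) => [] [] [] [];
move: (s (inord 4) == g.2.1.1 :> nat) (s (inord 5) == g.2.1.2 :> nat)
  (s (inord 6) == g.2.2 :> nat) => [] [] []; rewrite /= ?intrM; ring.
Qed.

End SparseForms.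

(** * Antisymmetric 3-forms in the coframe f^1, ..., f^7 *)

(* A list of pairs (c, (a, b, d)) stands for the 3-form sum of the c f^abd, with
   0-based indices; [mono3z] gives its components. *)
Definition alt3 (e : int * triple) : seq (int * triple) :=
  let: (c, (a, b, d)) := e in
  [:: (c, (a, b, d)); (- c, (b, a, d)); (- c, (a, d, b));
      (c, (b, d, a)); (c, (d, a, b)); (- c, (d, b, a))].

Definition alt_terms (L : seq (int * triple)) : seq (int * triple) := flatten (map alt3 L).

Definition mono3z (L : seq (int * triple)) : nat -> nat -> nat -> int := sparse3z (alt_terms L).

Lemma mono3z_cons e L i j k :
  mono3z (e :: L) i j k = e.1 * mono3z [:: (1, e.2)] i j k + mono3z L i j k.
Proof. by case: e => c [[a b] d]; rewrite /mono3z /sparse3z /=; ring. Qed.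

Lemma mono3z_linear L i j k :
  mono3z L i j k = sumz L (fun e => e.1 * mono3z [:: (1, e.2)] i j k).
Proof. by elim: L => [|e L IH] //=; rewrite mono3z_cons IH. Qed.

Lemma mono3z_monomial_antisym t i j k :
  mono3z [:: (1, t)] i j k = - mono3z [:: (1, t)] j i k
  /\ mono3z [:: (1, t)] i j k = - mono3z [:: (1, t)] i k j.
Proof.
case: t => [[a b] d]; rewrite /mono3z /sparse3z /=.
move: (i == a) (i == b) (i == d) (j == a) (j == b) (j == d) => [] [] [] [] [] [].
all: by move: (k == a) (k == b) (k == d) => [] [] [].
Qed.

Lemma mono3z_antisym L i j k :
  mono3z L i j k = - mono3z L j i k /\ mono3z L i j k = - mono3z L i k j.
Proof.
elim: L => [|e L [IH1 IH2]] //; have [E1 E2] := mono3z_monomial_antisym e.2 i j k.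
by rewrite !(mono3z_cons e) {1}E1 {1}IH1 E2 IH2 !opprD !mulrN.
Qed.

Lemma det3 (R : comPzRingType) (f : nat -> nat -> R) : \det (\matrix_(r < 3, s < 3) f r s) =
  f 0 0 * (f 1 1 * f 2 2 - f 1 2 * f 2 1) - f 0 1 * (f 1 0 * f 2 2 - f 1 2 * f 2 0)
  + f 0 2 * (f 1 0 * f 2 1 - f 1 1 * f 2 0).
Proof.
rewrite (expand_det_row _ ord0) !big_ord_recl big_ord0 /cofactor.
rewrite !(expand_det_row _ ord0) !big_ord_recl !big_ord0 /cofactor !det_mx11 !mxE /=.
by rewrite /bump /=; ring.
Qed.

Definition sort3 (i j k : nat) : int * triple :=
  if [|| i == j, j == k | i == k] then (0, (i, j, k)) else
  if (i < j)%N then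
    if (j < k)%N then (1, (i, j, k)) else if (i < k)%N then (-1, (i, k, j)) else (1, (k, i, j))
  else
    if (i < k)%N then (-1, (j, i, k)) else if (j < k)%N then (1, (j, k, i)) else (-1, (k, j, i)).

Definition triples (n : nat) : seq triple :=
  [seq (ij, k) | ij <- [seq (i, j) | i <- iota 0 n, j <- iota 0 n], k <- iota 0 n].

Definition incr_triples : seq triple := [seq t <- triples 7 | (t.1.1 < t.1.2 < t.2)%N].

Definition nz_terms (F : triple -> int) : seq (triple * int) :=
  [seq (t, F t) | t <- [seq t <- incr_triples | F t != 0]].

Lemma nz_terms_monomial i j k : (i < 7)%N -> (j < 7)%N -> (k < 7)%N ->
  nz_terms (fun t => mono3z [:: (1, t)] i j k)
  = if (sort3 i j k).1 == 0 then [::] else [:: ((sort3 i j k).2, (sort3 i j k).1)].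
Proof.
move=> hi hj hk; apply/eqP; move: i j k hi hj hk; apply: all3P.
by vm_compute.
Qed.

Section ThreeForms.
Variable R : realType.

Definition mono3 L : form3 R := fun i j k => (mono3z L i j k)%:~R.

Lemma e3_mono3 a b c (i j k : 'I_7) : e3 R a b c i j k = mono3 [:: (1, (a, b, c))] i j k.
Proof.
rewrite /e3 (det3 (fun r s =>
  (nth 0%N [:: a; b; c] r == nth 0%N [:: i : nat; j : nat; k : nat] s)%:R)).
rewrite /mono3 /mono3z /sparse3z /= !(intrD, intrM, intrN) -!mulnb -!pmulrn !natrM.
rewrite ![nat_of_ord i == _]eq_sym ![nat_of_ord j == _]eq_sym ![nat_of_ord k == _]eq_sym.
ring.
Qed.

Definition component3 (phi : form3 R) (t : triple) : R := phi (o7 t.1.1) (o7 t.1.2) (o7 t.2).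

Lemma sum_nz_terms (y : triple -> R) (F : triple -> int) :
  \sum_(t <- incr_triples) y t * (F t)%:~R = \sum_(u <- nz_terms F) y u.1 * u.2%:~R.
Proof.
rewrite big_map big_filter [RHS]big_mkcond; apply: eq_bigr => t _ /=.
by case: eqP => // ->; rewrite mulr0.
Qed.

Lemma antisym3_sort3 (phi : form3 R) : antisym3 phi -> forall i j k : 'I_7,
  phi i j k = (sort3 i j k).1%:~R * component3 phi (sort3 i j k).2.
Proof.
move=> hA i j k.
have s12 a b c : phi a b c = - phi b a c := (hA a b c).1.
have s23 a b c : phi a b c = - phi a c b := (hA a b c).2.
have z12 a c : phi a a c = 0 by have := s12 a a c; lra.
have z23 a b : phi a b b = 0 by have := s23 a b b; lra.
have z13 a b : phi a b a = 0 by rewrite s12 z23 oppr0.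
have o7K (a : 'I_7) : o7 a = a := inord_val a.
rewrite /sort3 /component3.
have [/val_inj eij|nij] := eqVneq (i : nat) j; first by rewrite eij z12 mul0r.
have [/val_inj ejk|njk] := eqVneq (j : nat) k; first by rewrite ejk orbT z23 mul0r.
have [/val_inj eik|nik] := eqVneq (i : nat) k; first by rewrite eik !orbT z13 mul0r.
rewrite /=.
case: ifP => _; [case: ifP => _; [|case: ifP => _] | case: ifP => _; [|case: ifP => _]].
all: rewrite /= !o7K.
- by rewrite mul1r.
- by rewrite s23 mulN1r.
- by rewrite mul1r (s12 k i j) (s23 i k j) opprK.
- by rewrite s12 mulN1r.
- by rewrite mul1r (s23 j k i) (s12 j i k) opprK.
- by rewrite mulN1r (s12 k j i) (s23 j k i) (s12 j i k) !opprK.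
Qed.

Lemma antisym3_expansion (phi : form3 R) : antisym3 phi -> forall i j k : 'I_7,
  phi i j k = \sum_(t <- incr_triples) component3 phi t * (mono3z [:: (1, t)] i j k)%:~R.
Proof.
move=> hA i j k; rewrite sum_nz_terms nz_terms_monomial // antisym3_sort3 //.
by case: eqP => [->|_]; rewrite ?mul0r ?big_nil // big_cons big_nil addr0 mulrC.
Qed.

Lemma antisym3_eq (phi psi : form3 R) : antisym3 phi -> antisym3 psi ->
  {in incr_triples, component3 phi =1 component3 psi} -> forall i j k, phi i j k = psi i j k.
Proof.
move=> hphi hpsi E i j k; rewrite antisym3_expansion // [RHS]antisym3_expansion //.
by apply: eq_big_seq => t /E ->.
Qed.

Lemma mono3_antisym L : antisym3 (mono3 L).
Proof. by move=> i j k; rewrite /mono3 -!intrN; have [-> ->] := mono3z_antisym L i j k. Qed.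

End ThreeForms.

(** * Structure constants of sp(2,R) and Lie derivatives *)

Definition Ez (b : nat -> int) (i j : nat) : int :=
  match i, j with
  | 0, 0 => b 5%N | 0, 1 => b 7%N | 0, 2 => b 9%N | 0, _ => 2 * b 10%N
  | 1, 0 => - b 4%N | 1, 1 => b 6%N | 1, 2 => b 8%N | 1, _ => b 9%N
  | 2, 0 => b 2%N | 2, 1 => b 3%N | 2, 2 => - b 6%N | 2, _ => - b 7%N
  | _, 0 => - 2 * b 1%N | _, 1 => b 2%N | _, 2 => b 4%N | _, _ => - b 5%N
  end.

Definition EIz (I : nat) : nat -> nat -> int := Ez (fun n => (n == I)%:Z).

Definition fbz (k i j : nat) : int :=
  match k with
  | 0 => EIz 1 i j | 1 => EIz 3 i j | 2 => EIz 4 i j | 3 => EIz 6 i j - EIz 5 i j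
  | 4 => EIz 7 i j | 5 => EIz 8 i j | 6 => EIz 10 i j | 7 => EIz 2 i j
  | 8 => EIz 5 i j + EIz 6 i j | _ => EIz 9 i j
  end.

Definition liebz (a b i j : nat) : int :=
  sumz (iota 0 4) (fun m => fbz a i m * fbz b m j - fbz b i m * fbz a m j).

(* Twice the coordinates [fdual], which are then integral on integer matrices. *)
Definition fdual2z (l : nat) (M : nat -> nat -> int) : int :=
  match l with
  | 0 => - M 3%N 0%N | 1 => 2 * M 2%N 1%N | 2 => - (2 * M 1%N 0%N) | 3 => M 1%N 1%N - M 0%N 0%N
  | 4 => 2 * M 0%N 1%N | 5 => 2 * M 1%N 2%N | 6 => M 0%N 3%N | 7 => 2 * M 2%N 0%N
  | 8 => M 0%N 0%N + M 1%N 1%N | _ => 2 * M 0%N 2%N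
  end.

Definition struct_const (a i l : nat) : int := fdual2z l (liebz a i).

Section StructureConstants.
Variable R : realType.

Lemma Emat_intr (b : nat -> int) :
  Emat (fun n => (b n)%:~R : R) = \matrix_(i < 4, j < 4) (Ez b i j)%:~R.
Proof.
apply/matrixP => i j; rewrite !mxE.
by case: i => [[|[|[|[|?]]]] ?]; case: j => [[|[|[|[|?]]]] ?] //=; rewrite ?intrM ?intrN.
Qed.

Lemma fb_intr (k : 'I_10) : fb R k = \matrix_(i < 4, j < 4) (fbz k i j)%:~R.
Proof.
have EI_intr I : EI R I = \matrix_(i < 4, j < 4) (EIz I i j)%:~R.
  by rewrite -Emat_intr.
case: k => [[|[|[|[|[|[|[|[|[|[|?]]]]]]]]]] ?] //=; rewrite /fb /= ?EI_intr //.
all: by apply/matrixP => i j; rewrite !mxE !(intrD, intrN).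
Qed.

Lemma fdual_lieb_fb (a i l : 'I_10) :
  fdual l (lieb (fb R a) (fb R i)) = (struct_const a i l)%:~R / 2.
Proof.
have lieb_intr : lieb (fb R a) (fb R i) = \matrix_(r < 4, s < 4) (liebz a i r s)%:~R.
  apply/matrixP => r s; rewrite /lieb !fb_intr !mxE !big_ord_recl !big_ord0 !mxE.
  by rewrite /liebz /= /bump /= ?addn0 ?add1n !(intrD, intrN, intrM); ring.
rewrite lieb_intr /fdual /mxe !mxE !inordK // /struct_const /fdual2z.
by case: l => [[|[|[|[|[|[|[|[|[|[|?]]]]]]]]]] ?] //=; rewrite ?(intrD, intrB, intrM, intrN); field.
Qed.

End StructureConstants.

Definition ext3z (G : nat -> nat -> nat -> int) (i j k : nat) : int :=
  if [&& (i < 7)%N, (j < 7)%N & (k < 7)%N] then G i j k else 0.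

Definition lie_deriv3z (G : nat -> nat -> nat -> int) (a i j k : nat) : int :=
  sumz (iota 0 10) (fun l => struct_const a i l * G l j k + struct_const a j l * G i l k
                             + struct_const a k l * G i j l).

Section LieDerivative.
Variable R : realType.

Lemma lie_deriv3_fb (phi : form3 R) (U : Type) (r : seq U) (y : U -> R)
    (G : U -> nat -> nat -> nat -> int) :
  (forall i j k : 'I_7, phi i j k = \sum_(u <- r) y u * (G u i j k)%:~R) ->
  forall a i j k : 'I_10, lie_deriv3 (fb R a) phi i j k =
    - (1 / 2) * \sum_(u <- r) y u * (lie_deriv3z (ext3z (G u)) a i j k)%:~R.
Proof.
move=> phiE a i j k.
have extE (l j' k' : 'I_10) : ext3 phi l j' k' = \sum_(u <- r) y u * (ext3z (G u) l j' k')%:~R.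
  rewrite /ext3 /ext3z; case: ifP => [/and3P [hl hj hk] | _].
    by rewrite phiE !inordK.
  by rewrite big1 // => u _; rewrite mulr0.
rewrite /lie_deriv3; under eq_bigr => l _ do rewrite !fdual_lieb_fb !extE.
rewrite mulNr; congr (- _); symmetry; rewrite /lie_deriv3z.
under [X in _ * X = _]eq_bigr => u _ do
  rewrite sumz_intr -[iota 0 10]/(index_iota 0 10) big_mkord big_distrr /=.
rewrite big_distrr /=; under eq_bigr => u _ do rewrite big_distrr /=.
rewrite exchange_big; apply: eq_bigr => l _.
rewrite !big_distrr -!big_split /=; apply: eq_bigr => u _.
by rewrite !(intrD, intrM); field.
Qed.

End LieDerivative.

(** * The D_s-invariant 3-forms *)

Definition inv_basis (n : nat) : seq (int * triple) :=
  match n with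
  | 0 => [:: (1, (0, 2, 5)%N)]
  | 1 => [:: (-4, (0, 2, 6)%N); (2, (0, 4, 5)%N); (1, (1, 2, 5)%N)]
  | 2 => [:: (-4, (0, 4, 6)%N); (-2, (1, 2, 6)%N); (1, (1, 4, 5)%N)]
  | 3 => [:: (1, (1, 4, 6)%N)]
  | _ => [:: (4, (0, 3, 6)%N); (1, (1, 3, 5)%N); (2, (2, 3, 4)%N)]
  end.

Lemma inv_basis_Ds_invariant : all (fun a => all (fun n =>
    all3 10 (fun i j k => lie_deriv3z (ext3z (mono3z (inv_basis n))) a i j k == 0))
  (iota 0 5)) [:: 7; 8; 9]%N.
Proof. by vm_compute. Qed.

(* Invariance under f_9 kills the components of nonzero weight, since f_9 acts
   diagonally; together with invariance under f_8 this already forces phi to lie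
   in the span of the basis above. *)
Definition inv_system : seq (seq (triple * int)) :=
  [seq e <- [seq nz_terms (fun t => lie_deriv3z (ext3z (mono3z [:: (1, t)])) a s.1.1 s.1.2 s.2)
            | a <- [:: 7; 8]%N, s <- incr_triples] | e != [::]].

Lemma incr_triples_lt7 :
  all (fun t => [&& (t.1.1 < 7)%N, (t.1.2 < 7)%N & (t.2 < 7)%N]) incr_triples.
Proof. by vm_compute. Qed.

Lemma foldr_and_in (T : eqType) (P : T -> Prop) (s : seq T) :
  foldr (fun x A => P x /\ A) True s -> {in s, forall x, P x}.
Proof. by elim: s => [|y s IH] //= [Py Ps] x; rewrite inE => /predU1P [->|/(IH Ps)]. Qed.

Lemma in_foldr_and (T : eqType) (P : T -> Prop) (s : seq T) :
  {in s, forall x, P x} -> foldr (fun x A => P x /\ A) True s.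
Proof.
elim: s => [|y s IH] //= Ps; split; first by apply: Ps; rewrite mem_head.
by apply: IH => x xs; apply: Ps; rewrite inE xs orbT.
Qed.

Lemma vanishing_term (R : numFieldType) (x : R) (c : int) :
  x * c%:~R + 0 = 0 -> c != 0 -> x = 0.
Proof. by rewrite addr0 => + c0 => /eqP; rewrite mulf_eq0 intr_eq0 (negPf c0) orbF => /eqP. Qed.

Lemma proportional_terms (R : numFieldType) (x y : R) (c d : int) :
  x * c%:~R + (y * d%:~R + 0) = 0 -> c != 0 -> x = y * (- d%:~R / c%:~R).
Proof.
move=> + c0; rewrite addr0 => /eqP; rewrite addr_eq0 => /eqP h.
have c0' : (c%:~R : R) != 0 by rewrite intr_eq0.
by apply: (mulIf c0'); rewrite h; field.
Qed.

(* Each equation of [inv_system] has at most two terms, and the first one can be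
   solved for in terms of a later component. *)
Ltac orient_all H :=
  lazymatch type of H with
  | _ /\ _ => let H1 := fresh in case: H => H1 H;
      lazymatch type of H1 with
      | _ * _ + 0 = 0 => move/vanishing_term: H1 => /(_ isT) H1
      | _ => move/proportional_terms: H1 => /(_ isT) H1
      end;
      orient_all H
  | _ => idtac
  end.

Section InvariantForms.
Variable R : realType.

Definition inv_form (x : nat -> R) : form3 R :=
  fun i j k => \sum_(n <- iota 0 5) x n * mono3 R (inv_basis n) i j k.

Lemma inv_form_antisym x : antisym3 (inv_form x).
Proof.
move=> i j k; rewrite /inv_form -!sumrN; split; apply: eq_bigr => n _.
all: by rewrite -mulrN; have [-> ->] := mono3_antisym R (inv_basis n) i j k.
Qed.

Lemma inv_form_Ds_invariant x : Ds_invariant (inv_form x).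
Proof.
move=> a ha i j k; rewrite (@lie_deriv3_fb _ _ _ (iota 0 5) x (fun n => mono3z (inv_basis n))) //.
rewrite big_seq big1 ?mulr0 // => n hn.
have a789 : (a : nat) \in [:: 7; 8; 9]%N by rewrite !inE; move: (ltn_ord a) ha; lia.
have /allP /(_ _ a789) /allP /(_ _ hn) /all3P check := inv_basis_Ds_invariant.
by rewrite (eqP (check _ _ _ (ltn_ord i) (ltn_ord j) (ltn_ord k))) mulr0.
Qed.

Lemma component3_inv_form x a b c : (a < 7)%N -> (b < 7)%N -> (c < 7)%N ->
  component3 (inv_form x) (a, b, c) = \sum_(n <- iota 0 5) x n * (mono3z (inv_basis n) a b c)%:~R.
Proof. by move=> ha hb hc; rewrite /component3 /inv_form /mono3 /o7 /= !inordK. Qed.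

Lemma Ds_invariant_system (phi : form3 R) : antisym3 phi -> Ds_invariant phi ->
  {in inv_system, forall e, \sum_(u <- e) component3 phi u.1 * u.2%:~R = 0}.
Proof.
move=> hA hinv e; rewrite mem_filter => /andP [_ /allpairsPdep [a [s [ha hs ->]]]].
have /and3P [h1 h2 h3] := allP incr_triples_lt7 s hs.
have ha' : (7 <= (inord a : 'I_10))%N by rewrite inordK; move: ha; rewrite !inE; lia.
have := hinv _ ha' (inord s.1.1) (inord s.1.2) (inord s.2).
rewrite (@lie_deriv3_fb _ _ _ _ _ (fun t => mono3z [:: (1, t)]) (antisym3_expansion hA)).
rewrite -sum_nz_terms !inordK.
- by move/eqP; rewrite mulf_eq0 oppr_eq0 => /orP [/eqP h|/eqP //]; move: h; lra.
all: by [move: ha; rewrite !inE; lia | apply: ltn_trans h1 _ | apply: ltn_trans h2 _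
        | apply: ltn_trans h3 _].
Qed.

(* Each component read off here occurs in exactly one basis form. *)
Definition inv_coords (phi : form3 R) (n : nat) : R :=
  match n with
  | 0 => component3 phi (0, 2, 5)%N | 1 => component3 phi (1, 2, 5)%N
  | 2 => component3 phi (1, 4, 5)%N | 3 => component3 phi (1, 4, 6)%N
  | _ => component3 phi (2, 3, 4)%N / 2
  end.

Lemma Ds_invariant_inv_form (phi : form3 R) : antisym3 phi -> Ds_invariant phi ->
  forall i j k, phi i j k = inv_form (inv_coords phi) i j k.
Proof.
move=> hA hinv; apply: antisym3_eq => //; first exact: inv_form_antisym.
have := in_foldr_and (Ds_invariant_system hA hinv).
vm_eval inv_system; cbn [foldr]; rewrite !big_cons !big_nil; cbn [fst snd] => eqs.
orient_all eqs.
apply: foldr_and_in; vm_eval incr_triples; cbn [foldr].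
do !split; rewrite component3_inv_form // !big_cons big_nil; cbn [inv_coords].
all: repeat match goal with |- context [mono3z ?L ?a ?b ?c] => vm_eval (mono3z L a b c) end.
all: repeat match goal with H : component3 _ ?t = _ |- context [component3 _ ?t] => rewrite H end.
all: by field; rewrite ?intr_eq0.
Qed.

End InvariantForms.

(** * Compatibility with g_K *)

Definition contract (mu : nat) (L : seq (int * triple)) : seq (int * (nat * nat)) :=
  [seq (e.1, (e.2.1.2, e.2.2)) | e <- L & e.2.1.1 == mu].

Definition compat_coef (mu nu : nat) (t : triple) : int :=
  wedgez (contract mu (alt_terms (inv_basis t.1.1))) (contract nu (alt_terms (inv_basis t.1.2)))
    (alt_terms (inv_basis t.2)).

(* The nonzero coefficients, times 24, of the cubic polynomial
   x |-> (f_mu _| phi) ^ (f_nu _| phi) ^ phi with phi = inv_form x, indexed by the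
   triples (n, m, p) of the monomials x_n x_m x_p. *)
Definition compat_poly (mu nu : nat) : seq (triple * int) :=
  [seq u <- [seq (t, compat_coef mu nu t) | t <- triples 5] | u.2 != 0].

Definition gKz (i j : nat) : int :=
  let sym a b := (((i == a) && (j == b)) + ((i == b) && (j == a)) : nat)%:Z in
  2 * sym 3 3 - 2 * sym 2 4 + sym 1 5 - 4 * sym 0 6.

Section Compatibility.
Variable R : realType.

Lemma gK_intr (i j : 'I_7) : gK R i j = (gKz i j)%:~R / 2.
Proof. by rewrite /gK /sprod /gKz !(intrD, intrB, intrM) -!pmulrn; field. Qed.

Lemma contr_sparse3 (mu : 'I_7) L i j : contr mu (sparse3 R L) i j = sparse2 R (contract mu L) i j.
Proof.
rewrite /contr /sparse3 /sparse2 /sparse3z /sparse2z !sumz_intr big_map big_filter [RHS]big_mkcond.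
apply: eq_bigr => -[c [[a b] d]] _ /=.
by rewrite (eq_sym a); case: (mu == a :> nat); rewrite /= ?mulr0.
Qed.

Lemma eq_wedge223_top (al al' be be' : form2 R) (ga ga' : form3 R) :
  (forall i j, al i j = al' i j) -> (forall i j, be i j = be' i j) ->
  (forall i j k, ga i j k = ga' i j k) ->
  wedge223_top al be ga = wedge223_top al' be' ga'.
Proof.
move=> Eal Ebe Ega; rewrite /wedge223_top; congr (_ * _); apply: eq_bigr => s _.
by rewrite Eal Ebe Ega.
Qed.

Lemma wedge223_top_trilinear (r : seq nat) (x : nat -> R) (A B : nat -> form2 R)
    (C : nat -> form3 R) :
  wedge223_top (fun i j => \sum_(n <- r) x n * A n i j) (fun i j => \sum_(m <- r) x m * B m i j)
     (fun i j k => \sum_(p <- r) x p * C p i j k) =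
  \sum_(n <- r) \sum_(m <- r) \sum_(p <- r) x n * x m * x p * wedge223_top (A n) (B m) (C p).
Proof.
rewrite /wedge223_top; under eq_bigr => s _ do rewrite mulr_sum3.
rewrite exchange_big big_distrr; apply: eq_bigr => n _.
rewrite exchange_big big_distrr; apply: eq_bigr => m _.
rewrite exchange_big big_distrr; apply: eq_bigr => p _.
rewrite !big_distrr; apply: eq_bigr => s _.
move: ((-1) ^+ s) (A n _ _) (B m _ _) (C p _ _ _) => sg a b c /=.
ring.
Qed.

Lemma wedge_inv_form (x : nat -> R) (mu nu : 'I_7) :
  wedge223_top (contr mu (inv_form x)) (contr nu (inv_form x)) (inv_form x) =
  1 / 24 * \sum_(u <- compat_poly mu nu) x u.1.1.1 * x u.1.1.2 * x u.1.2 * u.2%:~R.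
Proof.
rewrite (@eq_wedge223_top _ (fun i j => \sum_(n <- iota 0 5) x n *
      sparse2 R (contract mu (alt_terms (inv_basis n))) i j)
   _ (fun i j => \sum_(n <- iota 0 5) x n * sparse2 R (contract nu (alt_terms (inv_basis n))) i j)
   _ (fun i j k => \sum_(n <- iota 0 5) x n * sparse3 R (alt_terms (inv_basis n)) i j k));
  last 3 first.
- by move=> i j; apply: eq_bigr => n _; rewrite -contr_sparse3.
- by move=> i j; apply: eq_bigr => n _; rewrite -contr_sparse3.
- by [].
rewrite wedge223_top_trilinear /compat_poly big_filter big_map [in RHS]big_mkcond.
rewrite /triples !big_allpairs big_distrr; apply: eq_bigr => n _.
rewrite big_distrr; apply: eq_bigr => m _.
rewrite big_distrr; apply: eq_bigr => p _; cbn [fst snd].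
rewrite wedge223_top_sparse -/(compat_coef mu nu (n, m, p)).
by case: eqP => [->|_] /=; rewrite ?mulr0 //; ring.
Qed.

End Compatibility.

Ltac compat_instance h mu nu :=
  have := h (o7 mu) (o7 nu); rewrite /o7 !inordK //;
  vm_eval (compat_poly mu nu); vm_eval (gKz mu nu); rewrite !big_cons big_nil; cbn [fst snd].

Section CompatibleForms.
Variable R : realType.

Lemma compatible_ext (g : form2 R) (phi psi : form3 R) :
  (forall i j k, phi i j k = psi i j k) -> compatible g phi -> compatible g psi.
Proof. by move=> E hc mu nu; rewrite -hc; apply: eq_wedge223_top => *; rewrite /contr E. Qed.

Lemma Ds_invariant_ext (phi psi : form3 R) :
  (forall i j k, phi i j k = psi i j k) -> Ds_invariant phi -> Ds_invariant psi.
Proof.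
move=> E hinv a ha i j k; rewrite -(hinv a ha i j k) /lie_deriv3.
by congr (- _); apply: eq_bigr => l _; rewrite /ext3 !E.
Qed.

Lemma compatible_inv_formE (x : nat -> R) : compatible (gK R) (inv_form x) <->
  (forall mu nu : 'I_7,
     1 / 24 * \sum_(u <- compat_poly mu nu) x u.1.1.1 * x u.1.1.2 * x u.1.2 * u.2%:~R
     = 3 * ((gKz mu nu)%:~R / 2)).
Proof. by split=> h mu nu; have := h mu nu; rewrite wedge_inv_form gK_intr. Qed.

Lemma compat_cubic_solution (a d e b f : R) :
  f * f * f = 1 / 8 -> a * e * f = 2 * (d * d * f) ->
  a * b * f + 4 * (d * e * f) = 1 / 2 -> b * d * f = - 2 * (e * e * f) ->
  [/\ d = 0, e = 0, f = 1 / 2 & a * b = 1].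
Proof.
move=> c33 c05 c06 c16.
have hf : f = 1 / 2.
  have : (2 * f - 1) * (4 * f * f + 2 * f + 1) = 0.
    have -> : (2 * f - 1) * (4 * f * f + 2 * f + 1) = 8 * (f * f * f) - 1 by ring.
    by rewrite c33; lra.
  by move/eqP; rewrite mulf_eq0 => /orP [/eqP|/eqP h]; [lra | nra].
rewrite hf in c05 c06 c16.
have hd2 : a * e = 2 * (d * d) by lra.
have hab : a * b = 1 - 4 * (d * e) by lra.
have he2 : b * d = - 2 * (e * e) by lra.
have sq0 (y : R) : y * y = 0 -> y = 0 by move/eqP; rewrite mulf_eq0 orbb => /eqP.
(* (a b) (d e) = (a e) (b d) turns into (1 - 4 p) p = - 4 p^2 for p = d e *)
have hde : d * e = 0.
  have E : (a * b) * (d * e) = (a * e) * (b * d) by ring.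
  by rewrite hab hd2 he2 in E; nra.
have [hd he] : d = 0 /\ e = 0.
  have /eqP := hde; rewrite mulf_eq0 => /orP [/eqP hd|/eqP he].
    by split=> //; apply: sq0; move: he2; rewrite hd mulr0; lra.
  by split=> //; apply: sq0; move: hd2; rewrite he mulr0; lra.
by split=> //; lra.
Qed.

Lemma compatible_inv_form_coords (x : nat -> R) : compatible (gK R) (inv_form x) ->
  [/\ x 1%N = 0, x 2%N = 0, x 4%N = 1 / 2 & x 0%N * x 3%N = 1].
Proof.
move/compatible_inv_formE => h.
compat_instance h 3%N 3%N => h33; compat_instance h 0%N 5%N => h05.
compat_instance h 0%N 6%N => h06; compat_instance h 1%N 6%N => h16.
apply: compat_cubic_solution; lra.
Qed.

Definition fam_coords (q : R) (n : nat) : R :=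
  match n with 0 => q | 3 => q^-1 | 4 => 1 / 2 | _ => 0 end.

Lemma compatible_fam (q : R) : q != 0 -> compatible (gK R) (inv_form (fam_coords q)).
Proof.
move=> hq; apply/compatible_inv_formE.
case=> [[|[|[|[|[|[|[|?]]]]]]] ?] //; case=> [[|[|[|[|[|[|[|?]]]]]]] ?] //=.
all: match goal with |- context [compat_poly ?mu ?nu] =>
       vm_eval (compat_poly mu nu); vm_eval (gKz mu nu) end.
all: rewrite ?big_cons big_nil; cbn [fst snd fam_coords].
all: by field.
Qed.

Lemma phi_fam_inv_form (q : R) i j k : phi_fam q i j k = inv_form (fam_coords q) i j k.
Proof.
rewrite /phi_fam !e3_mono3 /inv_form /mono3.
under eq_bigr => n _ do rewrite mono3z_linear sumz_intr.
rewrite (_ : iota 0 5 = [:: 0; 1; 2; 3; 4]%N) //; cbn [inv_basis fam_coords].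
rewrite !big_cons !big_nil; cbn [fst snd fam_coords]; rewrite !intrM.
by move: q^-1 => q'; field.
Qed.

Lemma eq_inv_form (x y : nat -> R) : (forall n, (n < 5)%N -> x n = y n) ->
  forall i j k, inv_form x i j k = inv_form y i j k.
Proof. by move=> E i j k; apply: eq_big_seq => n; rewrite mem_iota => /E ->. Qed.

End CompatibleForms.

Theorem corollary4p4 (R : realType) (phi : form3 R) :
  antisym3 phi ->
  (Ds_invariant phi /\ compatible (gK R) phi
   <-> exists q : R, q != 0 /\ (forall i j k, phi i j k = phi_fam q i j k)).
Proof.
move=> hA; split.
- case=> hinv hcomp; move: (inv_coords phi) (Ds_invariant_inv_form hA hinv) => x phiE.
  have [x1 x2 x4 x03] := compatible_inv_form_coords (compatible_ext phiE hcomp).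
  have x0 : x 0%N != 0.
    by apply/eqP => h; move: x03; rewrite h mul0r => /eqP; rewrite eq_sym oner_eq0.
  exists (x 0%N); split=> // i j k.
  rewrite phiE phi_fam_inv_form; apply: eq_inv_form => -[|[|[|[|[|n]]]]] //= _.
  by apply: (mulfI x0); rewrite x03 mulfV.
- case=> q [hq phiE].
  have famE i j k : inv_form (fam_coords q) i j k = phi i j k by rewrite phiE phi_fam_inv_form.
  split; first exact: Ds_invariant_ext famE (inv_form_Ds_invariant _).
  exact: compatible_ext famE (compatible_fam hq).
Qed.
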